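(* Let $R$ be a commutative domain with unit, let $f\in R$ be nonzero and non-invertible, and let $S=R[u,v]/(uv-f)$ (a domain). Denote by $R[u]$ and $R[v]$ the subrings of $S$ generated by $R$ and $u$, resp. by $R$ and $v$. Let $\phi\in\operatorname{Frac}(S)$ and suppose there exist $d\in\mathbb{Z}_{\ge 0}$, $g\in R[u]$ and $h\in R[v]$ such that $\phi=\frac{g}{u^d}=\frac{h}{v^d}$. Then $\phi\in S$. *)

From mathcomp Require Import all_boot all_algebra.
Set Implicit Arguments. Unset Strict Implicit. Unset Printing Implicit Defensive.
Import GRing.Theory.
Local Open Scope ring_scope.

(* S = R[u,v]/(uv - f) is modelled via its presentation:
   R[u,v] is {poly {poly R}}, with u the inner variable (a constant of the
   outer polynomial ring) and v the outer variable.  Elements of S are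
   classes of such polynomials modulo the principal ideal (uv - f). *)
Section S.
Variable R : idomainType.

Definition Su : {poly {poly R}} := ('X : {poly R})%:P.
Definition Sv : {poly {poly R}} := 'X.

Definition Srel (f : R) : {poly {poly R}} := Su * Sv - (f%:P)%:P.

Definition eqS (f : R) (p q : {poly {poly R}}) : Prop :=
  exists r : {poly {poly R}}, p - q = r * Srel f.

Definition inRu (g : {poly R}) : {poly {poly R}} := g%:P.
Definition inRv (h : {poly R}) : {poly {poly R}} := map_poly polyC h.
End S.

From mathcomp Require Import all_boot all_algebra.
From mathcomp Require Import ring zify.
Import GRing.Theory.

(* Write p in R[u,v] as the sum of the p_j(u) v^j.  The R-linear map
   p |-> u^N p(u, f/u) = sum_j p_j(u) f^j u^(N-j) vanishes on the ideal (uv - f)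
   once N exceeds the v-degrees involved.  Applied to g(u) v^d - h(v) u^d, the
   coefficient of u^(N-d+i) gives f^d g_i = f^(2d-i) h_(2d-i), so
   g_i = f^(d-i) h_(2d-i) for i < d.  Hence each low term
   g_i u^i = h_(2d-i) f^(d-i) u^i is congruent to h_(2d-i) v^(d-i) u^d,
   while the terms with i >= d are multiples of u^d in R[u] already. *)

Set Implicit Arguments.
Unset Strict Implicit.
Unset Printing Implicit Defensive.

Local Open Scope ring_scope.

Section Congruence.
Variables (R : idomainType) (f : R).
Implicit Types p q : {poly {poly R}}.

Lemma eqSxx p : eqS f p p.
Proof. by exists 0; rewrite subrr mul0r. Qed.

Lemma eqSD p1 q1 p2 q2 :
  eqS f p1 q1 -> eqS f p2 q2 -> eqS f (p1 + p2) (q1 + q2).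
Proof.
move=> [r1 E1] [r2 E2]; exists (r1 + r2).
by rewrite mulrDl -E1 -E2 opprD addrACA.
Qed.

Lemma eqSMl a p q : eqS f p q -> eqS f (a * p) (a * q).
Proof. by move=> [r E]; exists (a * r); rewrite -mulrA -E mulrBr. Qed.

Lemma eqS_sum (I : Type) (s : seq I) (F G : I -> {poly {poly R}}) :
  (forall i, eqS f (F i) (G i)) ->
  eqS f (\sum_(i <- s) F i) (\sum_(i <- s) G i).
Proof. by move=> FG; apply: big_ind2 => //; [apply: eqSxx | apply: eqSD]. Qed.

Lemma eqS_expr_uv k : eqS f ((f ^+ k)%:P%:P) ((Su R * Sv R) ^+ k).
Proof.
exists (- \sum_(i < k) (Su R * Sv R) ^+ (k.-1 - i) * f%:P%:P ^+ i).
by rewrite !rmorphXn -opprB subrXX mulNr mulrC.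
Qed.

End Congruence.

Section SubstFU.
Variables (R : idomainType) (f : R).
Implicit Types p q r : {poly {poly R}}.

(* [u^N p(u, f/u)], a polynomial in [u] when [p] has [v]-degree below [N]. *)
Definition subst_fu (N : nat) p : {poly R} :=
  \sum_(j < N) p`_j * ((f ^+ j)%:P * 'X^(N - j)).

Lemma subst_fuB N p q : subst_fu N (p - q) = subst_fu N p - subst_fu N q.
Proof.
by rewrite /subst_fu -sumrB; apply: eq_bigr => j _; rewrite coefB mulrBl.
Qed.

Lemma subst_fu_Srel N r : (size r < N)%N -> subst_fu N (r * Srel f) = 0.
Proof.
case: N => // N rN; rewrite /subst_fu /Srel /Su /Sv mulrBr mulrA.
under eq_bigr do rewrite coefB coefMX !coefMC mulrBl.
rewrite sumrB big_ord_recl big_ord_recr /= [r`_N]nth_default // !mul0r.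
rewrite add0r addr0 -sumrB big1 // => j _.
rewrite /bump /= add1n add0n subSS subSn ?(ltnW (ltn_ord j)) //.
by rewrite !exprS rmorphM /=; ring.
Qed.

Lemma subst_fu_inRu_Sv N (g : {poly R}) d : (d < N)%N ->
  subst_fu N (inRu g * Sv R ^+ d) = (f ^+ d)%:P * g * 'X^(N - d).
Proof.
move=> dN; rewrite /subst_fu /inRu /Sv.
under eq_bigr do rewrite coefCM coefXn mulr_natr mulrb.
rewrite (bigD1 (Ordinal dN)) //= eqxx big1 ?addr0 => [|j jd].
  by rewrite mulrCA mulrA.
by rewrite ifN ?mul0r.
Qed.

Lemma coef_subst_fu_inRv_Su N (h : {poly R}) d j : (j < N)%N ->
  (subst_fu N (inRv h * Su R ^+ d))`_(N + d - j) = h`_j * f ^+ j.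
Proof.
move=> jN; rewrite /subst_fu /inRv /Su -rmorphXn coef_sum.
have term k : (map_poly polyC h * ('X^d)%:P)`_k * ((f ^+ k)%:P * 'X^(N - k)) =
              (h`_k * f ^+ k)%:P * 'X^(N - k + d).
  by rewrite coefMC coef_map /= mulrACA -rmorphM -exprD addnC.
rewrite (bigD1 (Ordinal jN)) //= big1 ?addr0 => [|k kj].
  by rewrite term coefCM coefXn -addnBAC ?(ltnW jN) // eqxx mulr1.
rewrite term coefCM coefXn; case: eqP => [|_]; last by rewrite mulr0.
by move: kj; rewrite -val_eqE /= => /eqP; lia.
Qed.

Lemma eqS_cross_coef d (g h : {poly R}) : f != 0 ->
  eqS f (inRu g * Sv R ^+ d) (inRv h * Su R ^+ d) ->
  forall i, (i < d)%N -> g`_i = h`_(d + (d - i)) * f ^+ (d - i).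
Proof.
move=> f0 [r E] i id; set N := (size r + d + d).+1.
have /eqP := congr1 (subst_fu N) E.
rewrite subst_fuB subst_fu_Srel ?subst_fu_inRu_Sv; [|lia|lia].
rewrite subr_eq0 => /eqP.
move=> /(congr1 (fun p : {poly R} => p`_(N + d - (d + (d - i))))).
rewrite coef_subst_fu_inRv_Su; last by lia.
rewrite coefMXn ifF; last by apply/negbTE; rewrite -leqNgt; lia.
have -> : (N + d - (d + (d - i)) - (N - d) = i)%N by lia.
rewrite coefCM exprD mulrA [_ * f ^+ d]mulrC -mulrA.
by apply: mulfI; rewrite expf_neq0.
Qed.
End SubstFU.

Lemma eqS_inRu_mul_Su_expr (R : idomainType) (f : R) d (g : {poly R})
    (c : nat -> R) :
  (forall i, (i < d)%N -> g`_i = c i * f ^+ (d - i)) ->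
  exists s, eqS f (inRu g) (s * Su R ^+ d).
Proof.
move=> gc; exists (\sum_(i < size g) if (i < d)%N
  then (c i)%:P%:P * Sv R ^+ (d - i) else (g`_i *: 'X^(i - d))%:P).
have -> : inRu g = \sum_(i < size g) (g`_i *: 'X^i)%:P.
  by rewrite /inRu -rmorph_sum -poly_def coefK.
rewrite mulr_suml.
apply: eqS_sum => i; case: ltnP => [id | di].
  have -> : ((g`_i *: 'X^i)%:P : {poly {poly R}}) =
            (c i)%:P%:P * (Su R ^+ i * (f ^+ (d - i))%:P%:P).
    rewrite gc // -mul_polyC /Su !rmorphM !rmorphXn /= -!mulrA.
    by rewrite [_ ^+ (d - i) * _]mulrC.
  rewrite -mulrA; apply: eqSMl.
  have -> : Sv R ^+ (d - i) * Su R ^+ d = Su R ^+ i * (Su R * Sv R) ^+ (d - i).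
    by rewrite exprMn mulrA -exprD subnKC ?(ltnW id) // mulrC.
  exact/eqSMl/eqS_expr_uv.
rewrite /Su -rmorphXn -rmorphM -scalerAl -exprD subnK //; exact: eqSxx.
Qed.

Theorem lemma1p8 (R : idomainType) (f : R) (d : nat) (g h : {poly R}) :
  f != 0 -> f \notin GRing.unit ->
  eqS f (inRu g * (Sv R) ^+ d) (inRv h * (Su R) ^+ d) ->
  exists s : {poly {poly R}}, eqS f (inRu g) (s * (Su R) ^+ d).
Proof.
move=> f0 _ E.
apply: (eqS_inRu_mul_Su_expr (c := fun i => h`_(d + (d - i)))).
exact: eqS_cross_coef.
Qed.
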